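(* Let $X$ be a topological space possessing an infinite metrizable gauge, let $\kappa$ be a regular cardinal with $\kappa\in\mathrm{MG}(X)$, let $A$ be a closed subset of $X$, let $G\in\mathcal{G}_\kappa$, let $S$ be a Dedekind complete g-characteristic subset of $G$, and let $h\in\mathrm{Ult}(X;S)$. Define $\Theta\colon X\times X\to S$ by $\Theta(x,y)=\min\{h(x,y),\max\{\varrho_{h,A}(x),\varrho_{h,A}(y)\}\}$. Then: (1) $\Theta$ is an $S$-pseudo-ultrametric on $X$, i.e. $\Theta(x,x)=0$, $\Theta\ge0$, $\Theta(x,y)=\Theta(y,x)$ and $\Theta(x,y)\le\max\{\Theta(x,z),\Theta(z,y)\}$ for all $x,y,z\in X$; (2) $\Theta(x,y)=0$ for all $x,y\in A$; (3) the restriction of $\Theta$ to $(X\setminus A)\times(X\setminus A)$ is an $S$-ultrametric on $X\setminus A$ generating the subspace topology of $X\setminus A$.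
   Context: A linearly ordered Abelian group is an Abelian group with a linear order compatible with addition. For $x,y\in G_{>0}$, $x\asymp y$ iff $y\le nx$ and $x\le my$ for some $n,m\in\mathbb{Z}_{\ge1}$; $\mathrm{Arc}(G)=G_{>0}/\asymp$, ordered by $[x]\preceq[y]$ iff ($nx<y$ for all $n$) or $x\asymp y$; $\mathrm{Arc}(G)^\perp$ is $\mathrm{Arc}(G)$ with a new least element adjoined. For a bottomed linearly ordered set $T$ (least element $\perp_T$, $T^*=T\setminus\{\perp_T\}$), $\chi(T)$ is the least cardinal $\kappa>0$ such that some strictly decreasing family $(s_\alpha)_{\alpha<\kappa}$ in $T^*$ has every $t\in T^*$ bounded below by some $s_\alpha$. A $G$-metric: $d\colon X^2\to G$, $d(x,y)=0\iff x=y$, $d\ge0$, symmetric, triangle inequality; $\mathrm{Met}(X;G)$ those generating the topology of $X$ via open balls. $\mathrm{MG}(X)$: cardinals $\kappa$ with some $G$, $\chi(\mathrm{Arc}(G)^\perp)=\kappa$, $\mathrm{Met}(X;G)\ne\emptyset$; infinite metrizable gauge: some $\kappa\in\mathrm{MG}(X)$ with $\kappa\ge\omega_0$. $\mathcal{G}_\kappa$: groups with $\chi(\mathrm{Arc}(G)^\perp)=\kappa$. A subset $S\subseteq G$ is g-characteristic if $S\subseteq G_{\ge 0}$, $0\in S$, and every $s\in G_{>0}$ has some $t\in S\setminus\{0\}$ with $t\le s$; $S$ is Dedekind complete if every non-empty subset of $S$ bounded above in $S$ has a supremum in $S$ (equivalently, every non-empty subset bounded below has an infimum in $S$). An $S$-ultrametric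 is $d\colon X^2\to S$ with $d(x,y)=0\iff x=y$, symmetric, $d(x,y)\le\max\{d(x,z),d(z,y)\}$; $\mathrm{Ult}(X;S)$ is the set of those generating the topology of $X$ via open balls of radii in $S\setminus\{0\}$. $\varrho_{h,A}(x)=\inf\{h(x,a):a\in A\}$, the infimum taken in $S$. *)

From mathcomp Require Import all_boot all_order all_algebra.
From mathcomp Require Import all_classical.
From mathcomp Require Import topology.

Set Implicit Arguments.
Unset Strict Implicit.
Unset Printing Implicit Defensive.

Import GRing.Theory.
Local Open Scope classical_set_scope.
Local Open Scope ring_scope.

Record loag := LOAG {
  lg_sort :> zmodType;
  lg_le : rel lg_sort;
  lg_refl : forall x, lg_le x x;
  lg_trans : forall x y z, lg_le x y -> lg_le y z -> lg_le x z;
  lg_anti : forall x y, lg_le x y -> lg_le y x -> x = y;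
  lg_total : forall x y, lg_le x y || lg_le y x;
  lg_addr : forall x y z, lg_le x y -> lg_le (x + z) (y + z)
}.

Definition glt (G : loag) (x y : G) : Prop := lg_le x y /\ x <> y.
Definition gmax (G : loag) (x y : G) : G := if lg_le x y then y else x.
Definition gmin (G : loag) (x y : G) : G := if lg_le x y then x else y.

Definition asymp (G : loag) (x y : G) : Prop :=
  exists n m : nat, (0 < n)%N /\ (0 < m)%N /\ lg_le y (x *+ n) /\ lg_le x (y *+ m).

Definition Arc (G : loag) : Type :=
  {C : set G | exists x : G, glt 0 x /\ C = [set y | glt 0 y /\ asymp x y]}.

Definition arc_le (G : loag) (C D : Arc G) : Prop :=
  exists x y : G, sval C x /\ sval D y /\
    ((forall n : nat, (0 < n)%N -> glt (x *+ n) y) \/ asymp x y).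

(* Arc(G)^⊥ : Arc(G) with a new least element (None) *)
Definition ArcB (G : loag) : Type := option (Arc G).
Definition arcB_le (G : loag) (C D : ArcB G) : Prop :=
  match C, D with
  | None, _ => True
  | Some _, None => False
  | Some c, Some d => arc_le c d
  end.

(* Cardinals, represented as initial ordinals                          *)
Definition card_le (A B : Type) : Prop := exists f : A -> B, injective f.

Record cardinal := Cardinal {
  cd_sort :> Type;
  cd_lt : cd_sort -> cd_sort -> Prop;
  cd_irrefl : forall a, ~ cd_lt a a;
  cd_trans : forall a b c, cd_lt a b -> cd_lt b c -> cd_lt a c;
  cd_total : forall a b, cd_lt a b \/ a = b \/ cd_lt b a;
  cd_wf : well_founded cd_lt;
  cd_initial : forall k : cd_sort, ~ card_le cd_sort {j : cd_sort | cd_lt j k}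
}.

Definition card_infinite (K : cardinal) : Prop := card_le nat K.

Definition regular (K : cardinal) : Prop :=
  card_infinite K /\
  forall C : set K, (forall k : K, exists c, C c /\ (cd_lt k c \/ k = c)) ->
    card_le K {c : K | C c}.

Definition dec_coinitial (T : Type) (le : T -> T -> Prop) (bot : T)
    (K : cardinal) (s : K -> T) : Prop :=
  (forall a : K, s a <> bot) /\
  (forall a b : K, cd_lt a b -> le (s b) (s a) /\ s b <> s a) /\
  (forall t : T, t <> bot -> exists a : K, le (s a) t).

Definition chi_is (T : Type) (le : T -> T -> Prop) (bot : T) (K : cardinal) : Prop :=
  inhabited K /\ (exists s : K -> T, dec_coinitial le bot s) /\
  forall K' : cardinal, inhabited K' -> (exists s : K' -> T, dec_coinitial le bot s) ->
    card_le K K'.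

Definition in_Gkappa (G : loag) (K : cardinal) : Prop :=
  chi_is (@arcB_le G) None K.

Definition is_Gmetric (X : Type) (G : loag) (d : X -> X -> G) : Prop :=
  (forall x y, d x y = 0 <-> x = y) /\
  (forall x y, lg_le 0 (d x y)) /\
  (forall x y, d x y = d y x) /\
  (forall x y z, lg_le (d x y) (d x z + d z y)).

Definition in_Met (X : topologicalType) (G : loag) (d : X -> X -> G) : Prop :=
  is_Gmetric d /\
  forall U : set X, open U <->
    (forall x, U x -> exists r : G, glt 0 r /\ [set y | glt (d x y) r] `<=` U).

Definition in_MG (X : topologicalType) (K : cardinal) : Prop :=
  exists G : loag, in_Gkappa G K /\ exists d : X -> X -> G, in_Met d.

Definition has_infinite_metrizable_gauge (X : topologicalType) : Prop :=
  exists K : cardinal, in_MG X K /\ card_infinite K.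

Definition g_characteristic (G : loag) (S : set G) : Prop :=
  (forall s, S s -> lg_le 0 s) /\ S 0 /\
  (forall s, glt 0 s -> exists t, S t /\ t <> 0 /\ lg_le t s).

Definition dedekind_complete (G : loag) (S : set G) : Prop :=
  forall B : set G, B `<=` S -> B !=set0 ->
    (exists u, S u /\ forall b, B b -> lg_le b u) ->
    exists u, S u /\ (forall b, B b -> lg_le b u) /\
      (forall v, S v -> (forall b, B b -> lg_le b v) -> lg_le u v).

Definition is_inf_in (G : loag) (S : set G) (B : set G) (m : G) : Prop :=
  S m /\ (forall b, B b -> lg_le m b) /\
  (forall v, S v -> (forall b, B b -> lg_le v b) -> lg_le v m).

Definition is_S_ultrametric_on (X : Type) (G : loag) (S : set G) (D : set X)
    (d : X -> X -> G) : Prop :=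
  (forall x y, D x -> D y -> S (d x y)) /\
  (forall x y, D x -> D y -> (d x y = 0 <-> x = y)) /\
  (forall x y, D x -> D y -> d x y = d y x) /\
  (forall x y z, D x -> D y -> D z -> lg_le (d x y) (gmax (d x z) (d z y))).

Definition generates_subspace_topology (X : topologicalType) (G : loag)
    (S : set G) (D : set X) (d : X -> X -> G) : Prop :=
  forall V : set X, V `<=` D ->
    ((exists U : set X, open U /\ V = U `&` D) <->
     (forall x, V x -> exists r : G, S r /\ r <> 0 /\
        (forall y, D y -> glt (d x y) r -> V y))).

Definition in_Ult (X : topologicalType) (G : loag) (S : set G)
    (d : X -> X -> G) : Prop :=
  is_S_ultrametric_on S setT d /\
  forall U : set X, open U <->
    (forall x, U x -> exists r : G, S r /\ r <> 0 /\ [set y | glt (d x y) r] `<=` U).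

Definition is_S_pseudo_ultrametric (X : Type) (G : loag) (S : set G)
    (d : X -> X -> G) : Prop :=
  (forall x y, S (d x y)) /\
  (forall x, d x x = 0) /\
  (forall x y, lg_le 0 (d x y)) /\
  (forall x y, d x y = d y x) /\
  (forall x y z, lg_le (d x y) (gmax (d x z) (d z y))).

Definition Theta (X : Type) (G : loag) (h : X -> X -> G) (rho : X -> G)
    (x y : X) : G :=
  gmin (h x y) (gmax (rho x) (rho y)).

From mathcomp Require Import all_boot all_order all_algebra.
From mathcomp Require Import all_classical.
From mathcomp Require Import topology.
Local Open Scope classical_set_scope.

Set Implicit Arguments.
Unset Strict Implicit.
Unset Printing Implicit Defensive.

(* The distance [rho] to A is ultrametrically 1-Lipschitz:
   [rho x <= max (h x y) (rho y)].  Hence Theta, which truncates h at the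
   larger of the two distances to A, still satisfies the strong triangle
   inequality, and it vanishes on A.  Off the closed set A we have
   [rho x > 0], so small Theta-balls around x are h-balls, and Theta induces
   the subspace topology on the complement of A. *)

Section LinearOrder.
Variable G : loag.
Implicit Types x y z : G.

Lemma gle_total x y : lg_le x y \/ lg_le y x.
Proof. by case/orP: (lg_total x y); auto. Qed.

Lemma gltNge x y : glt x y <-> ~~ lg_le y x.
Proof.
split=> [[xy nxy]|nyx].
  by apply/negP => yx; apply: nxy; apply: lg_anti.
split; first by case: (gle_total x y) => // yx; rewrite yx in nyx.
by move=> exy; rewrite exy lg_refl in nyx.
Qed.

Lemma glt_geF x y : glt x y -> lg_le y x -> False.
Proof. by move/gltNge => nyx yx; rewrite yx in nyx. Qed.

Lemma glt_le_trans x y z : glt x y -> lg_le y z -> glt x z.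
Proof.
move=> /gltNge nyx yz; apply/gltNge/negP => zx.
by rewrite (lg_trans yz zx) in nyx.
Qed.

Lemma gle_lt_trans x y z : lg_le x y -> glt y z -> glt x z.
Proof.
move=> xy /gltNge nzy; apply/gltNge/negP => zx.
by rewrite (lg_trans zx xy) in nzy.
Qed.

Lemma gmin_closed (P : G -> Prop) x y : P x -> P y -> P (gmin x y).
Proof. by rewrite /gmin; case: ifP. Qed.

Lemma gmax_closed (P : G -> Prop) x y : P x -> P y -> P (gmax x y).
Proof. by rewrite /gmax; case: ifP. Qed.

Lemma gmin_cases x y : gmin x y = x \/ gmin x y = y.
Proof. by rewrite /gmin; case: ifP; [left|right]. Qed.

Lemma gmax_cases x y : gmax x y = x \/ gmax x y = y.
Proof. by rewrite /gmax; case: ifP; [right|left]. Qed.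

Lemma gle_gminP x y z : lg_le z (gmin x y) <-> lg_le z x /\ lg_le z y.
Proof.
rewrite /gmin; case: ifP => [xy|nxy]; split=> [zm|[zx zy]] //.
- by split=> //; apply: lg_trans zm xy.
- split=> //; case: (gle_total x y) => [xy|yx]; last exact: lg_trans zm yx.
  by rewrite xy in nxy.
Qed.

Lemma gmax_leP x y z : lg_le (gmax x y) z <-> lg_le x z /\ lg_le y z.
Proof.
rewrite /gmax; case: ifP => [xy|nxy]; split=> [mz|[xz yz]] //.
- by split=> //; apply: lg_trans xy mz.
- split=> //; case: (gle_total x y) => [xy|yx]; last exact: lg_trans yx mz.
  by rewrite xy in nxy.
Qed.

Lemma gmin_lel x y : lg_le (gmin x y) x.
Proof. by have [] := (gle_gminP x y _).1 (lg_refl (gmin x y)). Qed.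

Lemma gmin_ler x y : lg_le (gmin x y) y.
Proof. by have [] := (gle_gminP x y _).1 (lg_refl (gmin x y)). Qed.

Lemma gmax_gel x y : lg_le x (gmax x y).
Proof. by have [] := (gmax_leP x y _).1 (lg_refl (gmax x y)). Qed.

Lemma gmax_ger x y : lg_le y (gmax x y).
Proof. by have [] := (gmax_leP x y _).1 (lg_refl (gmax x y)). Qed.

Lemma gmaxC x y : gmax x y = gmax y x.
Proof. by apply: lg_anti; apply/gmax_leP; split; rewrite ?gmax_gel ?gmax_ger. Qed.

Lemma gmax_ge_gt x y z : lg_le z (gmax x y) -> glt x z -> lg_le z y.
Proof.
by case: (gmax_cases x y) => -> // zx xz; case: (glt_geF xz zx).
Qed.

Lemma gmin_le_ltr x y z : lg_le (gmin x y) z -> glt z y -> lg_le x z.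
Proof.
by case: (gmin_cases x y) => -> // yz zy; case: (glt_geF zy yz).
Qed.

Lemma gmin_lt_ler x y z : glt (gmin x y) z -> lg_le z y -> glt x z.
Proof.
by case: (gmin_cases x y) => -> // yz zy; case: (glt_geF yz zy).
Qed.

Lemma gle_gmax_gmin x y z t :
  lg_le t (gmax x z) -> lg_le t (gmax y z) -> lg_le t (gmax (gmin x y) z).
Proof. by case: (gmin_cases x y) => ->. Qed.

End LinearOrder.

Section TruncatedUltrametric.
Variables (X : Type) (G : loag) (S : set G) (A : set X).
Variables (h : X -> X -> G) (rho : X -> G).
Hypothesis S_ge0 : forall s, S s -> lg_le 0%R s.
Hypothesis h_ult : is_S_ultrametric_on S setT h.
Hypothesis rho_inf : forall x, is_inf_in S [set h x a | a in A] (rho x).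

Let hS x y : S (h x y). Proof. exact: h_ult.1. Qed.
Let hxx x : h x x = 0%R. Proof. exact/(h_ult.2.1 x x I I). Qed.
Let hC x y : h x y = h y x. Proof. exact: h_ult.2.2.1. Qed.
Let h_max x y z : lg_le (h x y) (gmax (h x z) (h z y)).
Proof. exact: h_ult.2.2.2. Qed.

Local Notation T := (Theta h rho).

Lemma rho_S x : S (rho x).
Proof. by case: (rho_inf x). Qed.

Lemma rho_le_h x a : A a -> lg_le (rho x) (h x a).
Proof. by move=> Aa; apply: (rho_inf x).2.1; exists a. Qed.

Lemma rho_glb x v :
  S v -> (forall a, A a -> lg_le v (h x a)) -> lg_le v (rho x).
Proof. by move=> Sv vA; apply: (rho_inf x).2.2 => // _ [a Aa <-]; apply: vA. Qed.

Lemma rho_ge_radius x r :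
  S r -> [set y | glt (h x y) r] `<=` ~` A -> lg_le r (rho x).
Proof.
move=> Sr ball_nA; apply: rho_glb => // a Aa.
case: (boolP (lg_le r (h x a))) => // /gltNge har.
by case: (ball_nA a har).
Qed.

Lemma rho_eq0 x : A x -> rho x = 0%R.
Proof. by move=> Ax; apply: lg_anti; [rewrite -(hxx x); apply: rho_le_h | apply/S_ge0/rho_S]. Qed.

Lemma rho_le_gmax x y : lg_le (rho x) (gmax (h x y) (rho y)).
Proof.
case: (boolP (lg_le (rho x) (h x y))) => [rx_h | /gltNge h_rx].
  exact: lg_trans rx_h (gmax_gel _ _).
apply: lg_trans (gmax_ger (h x y) _); apply: rho_glb; first exact: rho_S.
move=> a Aa; apply: gmax_ge_gt h_rx.
exact: lg_trans (rho_le_h x Aa) (h_max x a y).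
Qed.

Lemma Theta_le_h x y : lg_le (T x y) (h x y).
Proof. exact: gmin_lel. Qed.

Lemma Theta_le_rho x y : lg_le (T x y) (gmax (rho x) (rho y)).
Proof. exact: gmin_ler. Qed.

Lemma ThetaC x y : T x y = T y x.
Proof. by rewrite /Theta hC gmaxC. Qed.

Lemma rho_le_gmax_Theta x z : lg_le (rho x) (gmax (T x z) (rho z)).
Proof.
apply: gle_gmax_gmin; first exact: rho_le_gmax.
exact: lg_trans (gmax_gel _ (rho z)) (gmax_gel _ _).
Qed.

(* Split on whether [rho z] is below the bound M: if so both distances to A
   are below M; if not, both Theta-values at z are h-values. *)
Lemma Theta_max x y z : lg_le (T x y) (gmax (T x z) (T z y)).
Proof.
set M := gmax _ _; have [TxzM TzyM] := (gmax_leP (T x z) (T z y) M).1 (lg_refl M).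
case: (boolP (lg_le (rho z) M)) => [rzM | /gltNge M_rz].
  apply: lg_trans (Theta_le_rho x y) _; apply/gmax_leP; split.
    by apply: lg_trans (rho_le_gmax_Theta x z) _; apply/gmax_leP.
  by apply: lg_trans (rho_le_gmax_Theta y z) _; apply/gmax_leP; rewrite ThetaC.
apply: lg_trans (Theta_le_h x y) (lg_trans (h_max x y z) _); apply/gmax_leP; split.
  exact: gmin_le_ltr TxzM (glt_le_trans M_rz (gmax_ger _ _)).
exact: gmin_le_ltr TzyM (glt_le_trans M_rz (gmax_gel _ _)).
Qed.

Lemma Theta_pseudo_ultrametric : is_S_pseudo_ultrametric S T.
Proof.
have TS x y : S (T x y).
  by apply: gmin_closed; [exact: hS | apply: gmax_closed; exact: rho_S].
split=> //; split=> [x|].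
  by apply: lg_anti; [rewrite -(hxx x); apply: Theta_le_h | apply: S_ge0].
by split=> [x y|]; [apply: S_ge0 | split; [apply: ThetaC | apply: Theta_max]].
Qed.

Lemma Theta_eq0 x y : A x -> A y -> T x y = 0%R.
Proof.
move=> Ax Ay; apply: lg_anti; last exact: S_ge0 (Theta_pseudo_ultrametric.1 x y).
apply: lg_trans (Theta_le_rho x y) _; rewrite (rho_eq0 Ax) (rho_eq0 Ay).
by apply/gmax_leP; split; apply: lg_refl.
Qed.

End TruncatedUltrametric.

Section SubspaceTopology.
Variables (X : topologicalType) (G : loag) (S : set G) (A : set X).
Variables (h : X -> X -> G) (rho : X -> G).
Hypothesis S_ge0 : forall s, S s -> lg_le 0%R s.
Hypothesis h_Ult : in_Ult S h.
Hypothesis rho_inf : forall x, is_inf_in S [set h x a | a in A] (rho x).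
Hypothesis A_closed : closed A.

Local Notation T := (Theta h rho).

Lemma rho_neq0 x : ~ A x -> rho x <> 0%R.
Proof.
move=> nAx rx0; have [r [Sr [r_neq0 ball_nA]]] :=
  (h_Ult.2 _).1 (closed_openC A_closed) x nAx.
by apply: r_neq0; apply: lg_anti (S_ge0 Sr); rewrite -rx0; apply: rho_ge_radius.
Qed.

Lemma Theta_sep x y : ~ A x -> T x y = 0%R -> x = y.
Proof.
rewrite /Theta => nAx; case: (gmin_cases (h x y) (gmax (rho x) (rho y))) => -> => [|m0].
  by move/(h_Ult.1.2.1 x y I I).
case: (rho_neq0 nAx); apply: lg_anti (S_ge0 (rho_S rho_inf x)).
by rewrite -m0; apply: gmax_gel.
Qed.

Lemma Theta_ultrametric_off : is_S_ultrametric_on S (~` A) T.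
Proof.
have [TS [Txx [_ [TC Tmax]]]] := Theta_pseudo_ultrametric S_ge0 h_Ult.1 rho_inf.
split=> [x y _ _|]; first exact: TS.
split=> [x y nAx _|]; first by split=> [|->]; [apply: Theta_sep | apply: Txx].
by split=> [x y _ _|x y z _ _ _]; [apply: TC | apply: Tmax].
Qed.

(* Shrinking the radius below [rho x] forces [T x y = h x y] on the ball. *)
Lemma Theta_ball_sub_open U x : open U -> U x -> ~ A x ->
  exists r, S r /\ r <> 0%R /\ (forall y, ~ A y -> glt (T x y) r -> U y).
Proof.
move=> oU Ux nAx; have [r [Sr [r_neq0 ball_U]]] := (h_Ult.2 U).1 oU x Ux.
exists (gmin r (rho x)); split; first exact: gmin_closed Sr (rho_S rho_inf x).
split; first exact: (gmin_closed (P := fun t => t <> 0%R) r_neq0 (rho_neq0 nAx)).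
move=> y _ Txy_lt; apply: ball_U => /=.
apply: glt_le_trans (gmin_lel r (rho x)).
exact: gmin_lt_ler Txy_lt (lg_trans (gmin_ler _ _) (gmax_gel _ _)).
Qed.

Lemma open_of_Theta_balls V : V `<=` ~` A ->
  (forall x, V x -> exists r, S r /\ r <> 0%R /\
     (forall y, ~ A y -> glt (T x y) r -> V y)) ->
  open V.
Proof.
move=> V_nA V_balls; apply/(h_Ult.2 V) => x Vx.
have [r [Sr [r_neq0 ball_V]]] := V_balls x Vx.
have [s [Ss [s_neq0 ball_nA]]] := (h_Ult.2 _).1 (closed_openC A_closed) x (V_nA x Vx).
exists (gmin r s); split; first exact: gmin_closed.
split; first exact: (gmin_closed (P := fun t => t <> 0%R)).
move=> y /= hxy; apply: ball_V.
  by apply: ball_nA; apply: glt_le_trans hxy (gmin_ler _ _).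
exact: gle_lt_trans (Theta_le_h h rho x y) (glt_le_trans hxy (gmin_lel _ _)).
Qed.

Lemma Theta_generates_subspace_topology : generates_subspace_topology S (~` A) T.
Proof.
move=> V V_nA; split=> [[U [oU ->]] x [Ux nAx]|V_balls].
  have [r [Sr [r_neq0 ball_U]]] := Theta_ball_sub_open oU Ux nAx.
  by exists r; do 2 split=> //; move=> y nAy /(ball_U y nAy).
by exists V; split; [apply: open_of_Theta_balls | rewrite setIidl].
Qed.

End SubspaceTopology.

Theorem proposition4p2 (X : topologicalType) (K : cardinal) (A : set X)
    (G : loag) (S : set G) (h : X -> X -> G) (rho : X -> G) :
  has_infinite_metrizable_gauge X ->
  regular K -> in_MG X K ->
  closed A ->
  in_Gkappa G K ->
  g_characteristic S -> dedekind_complete S ->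
  in_Ult S h ->
  (* rho = ϱ_{h,A}: rho x is the infimum in S of {h(x,a) : a ∈ A} *)
  (forall x : X, is_inf_in S [set h x a | a in A] (rho x)) ->
  is_S_pseudo_ultrametric S (Theta h rho) /\
  (forall x y, A x -> A y -> Theta h rho x y = 0%R) /\
  (is_S_ultrametric_on S (~` A) (Theta h rho) /\
   generates_subspace_topology S (~` A) (Theta h rho)).
Proof.
(* The gauge, cardinal and Dedekind-completeness hypotheses only guarantee
   that the infima [rho x] exist; here they are given. *)
move=> _ _ _ A_closed _ [S_ge0 _] _ h_Ult rho_inf.
split; first exact: Theta_pseudo_ultrametric S_ge0 h_Ult.1 rho_inf.
split; first exact: Theta_eq0 S_ge0 h_Ult.1 rho_inf.
split; first exact: Theta_ultrametric_off.
exact: Theta_generates_subspace_topology.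
Qed.
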